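(* Let $X=\Delta[2]/\partial\Delta[2]$. Then $DSd\,X\cong\Delta[1]$.
   Context: $Sd$ is the Kan (normal) subdivision functor on simplicial sets: the left Kan extension along the Yoneda embedding of $[n]\mapsto N(\text{poset of non-empty subsets of }[n])$; it commutes with colimits and preserves degreewise injective maps. $\Delta[2]/\partial\Delta[2]$ is the pushout of $\Delta[0]\leftarrow\partial\Delta[2]\to\Delta[2]$. A simplicial set is non-singular if every non-degenerate simplex has degreewise injective representing map. The desingularization $DY$ is the image of $Y\to\prod_f Z$, $y\mapsto(f(y))_f$, over all quotient maps $f:Y\to Z$ (maps $Y\to Y/R$ for operator-compatible families of equivalence relations) with $Z$ non-singular. *)

From Stdlib Require Import Relation_Definitions ClassicalEpsilon FunctionalExtensionality
     PropExtensionality ProofIrrelevance Relation_Operators.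
From mathcomp Require Import all_boot.

Set Implicit Arguments.
Unset Strict Implicit.
Unset Printing Implicit Defensive.

(* The simplex category: morphisms [m] -> [n] are monotone maps        *)
(* 'I_m.+1 -> 'I_n.+1.                                                  *)
Definition ord_mono m n (f : 'I_m.+1 -> 'I_n.+1) :=
  forall i j : 'I_m.+1, i <= j -> f i <= f j.

Record Hom (m n : nat) := MkHom { homf :> 'I_m.+1 -> 'I_n.+1; homP : ord_mono homf }.

Lemma ord_mono_id n : ord_mono (fun i : 'I_n.+1 => i).
Proof. by []. Qed.

Definition hom_id n : Hom n n := MkHom (@ord_mono_id n).

Lemma ord_mono_comp m n p (g : Hom n p) (f : Hom m n) : ord_mono (fun i => g (f i)).
Proof. by move=> i j le; apply: (homP g); apply: (homP f). Qed.

Definition hom_comp m n p (g : Hom n p) (f : Hom m n) : Hom m p :=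
  MkHom (ord_mono_comp g f).

(* Simplicial sets: X_n together with the contravariant action of the  *)
(* simplex category; the functoriality laws are recorded by the        *)
(* predicate [is_simplicial].                                          *)
Record sSet := MkSSet {
  simp :> nat -> Type;
  sact : forall m n, Hom m n -> simp n -> simp m }.
Arguments sact {s m n}.

Definition is_simplicial (X : sSet) :=
  (forall n (x : X n), sact (hom_id n) x = x) /\
  (forall m n p (f : Hom m n) (g : Hom n p) (x : X p),
      sact (hom_comp g f) x = sact f (sact g x)).

Record smap (X Y : sSet) := MkSMap {
  smapf :> forall n, X n -> Y n;
  smap_nat : forall m n (f : Hom m n) (x : X n), smapf (sact f x) = sact f (smapf x) }.

Definition sIso (X Y : sSet) : Prop :=
  exists (f : smap X Y) (g : smap Y X),
    (forall n (x : X n), g n (f n x) = x) /\ (forall n (y : Y n), f n (g n y) = y).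

Definition quot (T : Type) (R : T -> T -> Prop) := {P : T -> Prop | exists x, P = R x}.

Definition cls (T : Type) (R : T -> T -> Prop) (x : T) : quot R :=
  exist _ (R x) (ex_intro _ x erefl).

Definition rep (T : Type) (R : T -> T -> Prop) (P : quot R) : T :=
  proj1_sig (constructive_indefinite_description _ (proj2_sig P)).

Definition eqv_gen (T : Type) (R : T -> T -> Prop) := clos_refl_sym_trans T R.

Definition Delta (n : nat) : sSet :=
  @MkSSet (fun k => Hom k n) (fun m k (t : Hom m k) (f : Hom k n) => hom_comp f t).

Definition not_surj k n (f : Hom k n) := exists i : 'I_n.+1, forall j, f j != i.

Lemma not_surj_comp m k n (t : Hom m k) (f : Hom k n) :
  not_surj f -> not_surj (hom_comp f t).
Proof. by case=> i Hi; exists i => j; apply: Hi. Qed.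

Definition bDelta (n : nat) : sSet :=
  @MkSSet (fun k => {f : Hom k n | not_surj f})
    (fun m k (t : Hom m k) f =>
       exist _ (hom_comp (proj1_sig f) t) (not_surj_comp t (proj2_sig f))).

Definition bincl n : forall k, bDelta n k -> Delta n k := fun k f => proj1_sig f.

Lemma ord_mono_const0 k : ord_mono (fun _ : 'I_k.+1 => (ord0 : 'I_1)).
Proof. by []. Qed.
Definition to_pt (X : sSet) : forall k, X k -> Delta 0 k :=
  fun k _ => MkHom (@ord_mono_const0 k).

Definition pushout_rel (C A B : sSet) (f : forall k, C k -> A k)
  (g : forall k, C k -> B k) k : (A k + B k)%type -> (A k + B k)%type -> Prop :=
  eqv_gen (fun u v => exists c : C k, u = inl (f k c) /\ v = inr (g k c)).

Arguments pushout_rel {C A B} f g k.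

Definition sum_act (A B : sSet) m k (t : Hom m k) (u : (A k + B k)%type)
  : (A m + B m)%type :=
  match u with inl a => inl (sact t a) | inr b => inr (sact t b) end.

Definition pushout (C A B : sSet) (f : forall k, C k -> A k)
  (g : forall k, C k -> B k) : sSet :=
  @MkSSet (fun k => quot (pushout_rel f g k))
    (fun m k t P => cls _ (sum_act t (rep P))).

Definition X2 : sSet := pushout (@to_pt (bDelta 2)) (@bincl 2).

(* Kan's normal subdivision Sd, as the left Kan extension of           *)
(* [n] |-> N(poset of non-empty subsets of [n]) along Yoneda, i.e. the  *)
(* coend (Sd X)_k = (sum_n X_n x N(P[n])_k) / ~ .                       *)
(* k-simplices of the nerve of the poset of non-empty subsets of [n]    *)
Record Chain (k n : nat) := MkChain {
  chf :> 'I_k.+1 -> {set 'I_n.+1};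
  ch_ne : forall i, chf i != set0;
  ch_mono : forall i j : 'I_k.+1, i <= j -> chf i \subset chf j }.

Lemma chain_pre_ne k' k n (t : Hom k' k) (c : Chain k n) i : c (t i) != set0.
Proof. exact: ch_ne. Qed.
Lemma chain_pre_mono k' k n (t : Hom k' k) (c : Chain k n) (i j : 'I_k'.+1) :
  i <= j -> c (t i) \subset c (t j).
Proof. by move=> le; apply: ch_mono; apply: homP. Qed.
Definition chain_pre k' k n (t : Hom k' k) (c : Chain k n) : Chain k' n :=
  MkChain (chain_pre_ne t c) (chain_pre_mono t c).

Lemma chain_push_ne k m n (th : Hom m n) (c : Chain k m) i : th @: c i != set0.
Proof.
apply/set0Pn; case/set0Pn: (ch_ne c i) => x Hx; exists (th x).
exact: imset_f.
Qed.
Lemma chain_push_mono k m n (th : Hom m n) (c : Chain k m) (i j : 'I_k.+1) :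
  i <= j -> th @: c i \subset th @: c j.
Proof. by move=> le; apply: imsetS; apply: ch_mono. Qed.
Definition chain_push k m n (th : Hom m n) (c : Chain k m) : Chain k n :=
  MkChain (chain_push_ne th c) (chain_push_mono th c).

Definition Sd_pre (X : sSet) (k : nat) := {n : nat & (X n * Chain k n)%type}.

Definition Sd_rel (X : sSet) (k : nat) : Sd_pre X k -> Sd_pre X k -> Prop :=
  eqv_gen (fun u v => exists m n (th : Hom m n) (x : X n) (c : Chain k m),
              u = existT _ m (sact th x, c) /\ v = existT _ n (x, chain_push th c)).

Arguments Sd_rel : clear implicits.

Definition Sd_act (X : sSet) k' k (t : Hom k' k) (u : Sd_pre X k) : Sd_pre X k' :=
  existT _ (projT1 u) ((projT2 u).1, chain_pre t (projT2 u).2).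

Definition Sd (X : sSet) : sSet :=
  @MkSSet (fun k => quot (Sd_rel X k))
    (fun k' k t P => cls _ (Sd_act t (rep P))).

Definition degenerate (Y : sSet) n (y : Y n) :=
  exists m (s : Hom n m) (z : Y m), m < n /\ y = sact s z.

(* the representing map Delta[n] -> Y of y is degreewise injective *)
Definition nonsingular (Y : sSet) :=
  forall n (y : Y n), ~ degenerate y ->
    forall k (f g : Hom k n), sact f y = sact g y -> f = g.

Definition compat_equiv (Y : sSet) (R : forall n, Y n -> Y n -> Prop) :=
  (forall n, equivalence (Y n) (R n)) /\
  (forall m n (t : Hom m n) (y y' : Y n), R n y y' -> R m (sact t y) (sact t y')).

Arguments compat_equiv : clear implicits.

Definition quotS (Y : sSet) (R : forall n, Y n -> Y n -> Prop) : sSet :=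
  @MkSSet (fun n => quot (R n)) (fun m n t P => cls _ (sact t (rep P))).

Arguments quotS : clear implicits.

(* Desingularization: image of Y -> prod_f Z over all quotient maps     *)
(* f : Y -> Y/R with Y/R non-singular.                                  *)
Definition DIndex (Y : sSet) :=
  {R : forall n, Y n -> Y n -> Prop | compat_equiv Y R /\ nonsingular (quotS Y R)}.

Definition DProd (Y : sSet) : sSet :=
  @MkSSet (fun n => forall i : DIndex Y, quotS Y (proj1_sig i) n)
    (fun m n t p => fun i => sact t (p i)).

Definition Dmap (Y : sSet) n (y : Y n) : DProd Y n :=
  fun i => cls _ y.

Lemma Dmap_nat (Y : sSet) m n (t : Hom m n) (y : Y n) :
  sact (s := DProd Y) t (Dmap y) = Dmap (sact t y).
Proof.
apply: functional_extensionality_dep => -[R [[Heq Hc] Hns]] /=.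
rewrite /Dmap /cls /rep /=.
case: (constructive_indefinite_description _ _) => z Hz /=.
have Ryz : R n y z.
  by rewrite Hz; case: (Heq n) => refl _ _; apply: refl.
have Rt := Hc m n t y z Ryz.
case: (Heq m) => _ trans sym.
have E : R m (sact t z) = R m (sact t y).
  apply: functional_extensionality => w; apply: propositional_extensionality; split.
  - by move=> H; apply: trans Rt H.
  - by move=> H; apply: trans (sym _ _ Rt) H.
by apply: eq_sig_hprop => [P p q|]; [apply: proof_irrelevance | rewrite /= E].
Qed.

Definition Dact (Y : sSet) m n (t : Hom m n)
  (p : {p : DProd Y n | exists y, p = Dmap y}) : {p : DProd Y m | exists y, p = Dmap y} :=
  exist _ (sact t (proj1_sig p))
    (match proj2_sig p with ex_intro y Hy =>
       ex_intro _ (sact t y) (eq_trans (f_equal (sact t) Hy) (Dmap_nat t y)) end).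

Definition Desing (Y : sSet) : sSet :=
  @MkSSet (fun n => {p : DProd Y n | exists y, p = Dmap y}) (@Dact Y).

From mathcomp Require Import all_boot zify.
From Stdlib Require Import Relation_Definitions Relation_Operators Operators_Properties
  ClassicalEpsilon FunctionalExtensionality PropExtensionality ProofIrrelevance Classical.

(* Every simplex of Y = Sd X is a chain of faces of the non-degenerate 2-simplex of X.
   Recording at each vertex whether the face is the whole 2-simplex gives a natural surjection
   phi : Y -> Delta[1] with a section; as Delta[1] is non-singular, so is the quotient of Y by
   the kernel of phi.  Conversely, a non-singular quotient identifies any two faces of a simplex
   that have the same vertices.  All proper faces of the 2-simplex are one vertex of Y, so
   a chain can be moved to a canonical chain with the same phi-value by such identifications.
   Hence the kernel of phi is the finest non-singular quotient relation, and D Y = Delta[1]. *)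

Set Implicit Arguments.
Unset Strict Implicit.
Unset Printing Implicit Defensive.

Lemma hom_eq m n (f g : Hom m n) : (forall i, f i = g i) -> f = g.
Proof.
case: f g => f Hf [g Hg] /= E.
have E' : f = g by apply: functional_extensionality.
by subst; f_equal; apply: proof_irrelevance.
Qed.

Lemma chain_eq k n (c d : Chain k n) : (forall i, c i = d i) -> c = d.
Proof.
case: c d => c H1 H2 [d H3 H4] /= E.
have E' : c = d by apply: functional_extensionality.
by subst; f_equal; apply: proof_irrelevance.
Qed.

Lemma ord1_eq (a b : 'I_1) : a = b.
Proof. by apply: val_inj; case: a b => [[|//] ?] [[|//] ?]. Qed.

Lemma clos_rst_congr (T U : Type) (R : T -> T -> Prop) (f : T -> U) :
  (forall x y, R x y -> f x = f y) ->
  forall u v, clos_refl_sym_trans T R u v -> f u = f v.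
Proof.
move=> H u v; elim=> [x y /H //| //| x y _ -> //| x y z _ -> _ -> //].
Qed.

Lemma clos_rst_map (T U : Type) (R : T -> T -> Prop) (S : U -> U -> Prop) (f : T -> U) :
  (forall x y, R x y -> S (f x) (f y)) ->
  forall u v, clos_refl_sym_trans T R u v -> clos_refl_sym_trans U S (f u) (f v).
Proof.
move=> H u v; elim=> [x y /H|x|x y _|x y z _ E1 _ E2].
- exact: rst_step.
- exact: rst_refl.
- exact: rst_sym.
- exact: rst_trans E1 E2.
Qed.

Section Quotient.
Variables (T : Type) (R : T -> T -> Prop) (HR : equivalence T R).

Lemma rep_cls x : R x (rep (cls R x)).
Proof.
rewrite /rep; case: (constructive_indefinite_description _ _) => z /= ->.
exact: (equiv_refl _ _ HR).
Qed.

Lemma cls_eq x y : R x y -> cls R x = cls R y.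
Proof.
move=> Hxy; have E : R x = R y.
  apply: functional_extensionality => w; apply: propositional_extensionality; split.
  - by apply: (equiv_trans _ _ HR); apply: (equiv_sym _ _ HR).
  - exact: (equiv_trans _ _ HR).
by apply: eq_sig_hprop => [P p q|]; [apply: proof_irrelevance | rewrite /= E].
Qed.

Lemma cls_inj x y : cls R x = cls R y -> R x y.
Proof.
by move=> E; have : proj1_sig (cls R x) y by rewrite E /=; apply: (equiv_refl _ _ HR).
Qed.

Lemma cls_rep (P : quot R) : cls R (rep P) = P.
Proof.
rewrite /rep; case: (constructive_indefinite_description _ _) => z /= Hz.
case: P Hz => P HP /= Hz; subst.
by apply: eq_sig_hprop => [Q p q|]; [apply: proof_irrelevance|].
Qed.

Lemma quot_ind (P : quot R -> Prop) : (forall x, P (cls R x)) -> forall q, P q.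
Proof. by move=> H q; rewrite -(cls_rep q). Qed.
End Quotient.

Definition hom_const k n (j : 'I_n.+1) : Hom k n :=
  @MkHom k n (fun _ => j) (fun _ _ _ => leqnn _).

Notation hom_vertex := (hom_const 0).

Lemma nondegenerate_decomposition (Z : sSet) : is_simplicial Z ->
  forall n (z : Z n), exists m (s : Hom n m) (w : Z m), z = sact s w /\ ~ degenerate w.
Proof.
move=> [Hid Hcomp]; elim/ltn_ind => n IH z.
case: (classic (degenerate z)) => [[m [s [z' [Hm ->]]]]|Hz]; last first.
  by exists n, (hom_id n), z; rewrite Hid.
have [m' [s' [w [-> Hw]]]] := IH m Hm z'.
by exists m', (hom_comp s' s), w; rewrite Hcomp.
Qed.

(* Write [z] as a degeneracy of a non-degenerate [w], whose representing map is injective. *)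
Lemma nonsingular_act_vertices (Z : sSet) : is_simplicial Z -> nonsingular Z ->
  forall n (z : Z n) k (f g : Hom k n),
  (forall i, sact (hom_vertex (f i)) z = sact (hom_vertex (g i)) z) -> sact f z = sact g z.
Proof.
move=> HZ Hns n z k f g Hv.
have [m [s [w [Ez Hw]]]] := nondegenerate_decomposition HZ z; subst z.
case: HZ => _ Hcomp; rewrite -!Hcomp; congr sact; apply: hom_eq => i /=.
have := Hv i; rewrite -!Hcomp => /(Hns _ _ Hw) E.
exact: (f_equal (fun h : Hom 0 m => h ord0) E).
Qed.

Lemma hom_step_eq_of_not_injective k n (y : Hom k n) (a b : 'I_k.+1) :
  a < b -> y a = y b -> exists2 i : nat, i < k & y (inord i) = y (inord i.+1).
Proof.
move=> ab Eab; have bk := ltn_ord b; exists a; first by lia.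
have le1 : y a <= y (inord a.+1) by apply: homP; rewrite inordK; lia.
have le2 : y (inord a.+1) <= y b by apply: homP; rewrite inordK; lia.
by rewrite inord_val; apply: val_inj; apply/eqP; rewrite eqn_leq le1 Eab.
Qed.

Section Degeneracy.
Variables (k n i : nat) (y : Hom k.+1 n).
Hypotheses (ik : i < k.+1) (Ey : y (inord i) = y (inord i.+1)).

Definition codeg_fun (j : 'I_k.+2) : 'I_k.+1 := inord (if j <= i then j : nat else j.-1).
Definition coface_fun (j : 'I_k.+1) : 'I_k.+2 := inord (if j <= i then j : nat else j.+1).

Lemma codeg_mono : ord_mono codeg_fun.
Proof.
move=> a b ab; have := ltn_ord a; have := ltn_ord b; rewrite /codeg_fun.
by case: (leqP a i); case: (leqP b i) => /= ? ? ? ?; rewrite !inordK; lia.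
Qed.

Lemma coface_mono : ord_mono coface_fun.
Proof.
move=> a b ab; have := ltn_ord a; have := ltn_ord b; rewrite /coface_fun.
by case: (leqP a i); case: (leqP b i) => /= ? ? ? ?; rewrite !inordK; lia.
Qed.

Lemma degenerate_of_step : degenerate (y : Delta n k.+1).
Proof.
exists k, (MkHom codeg_mono), (hom_comp y (MkHom coface_mono)); split => //.
apply: hom_eq => j /=; have jk := ltn_ord j; rewrite /coface_fun /codeg_fun.
case: (leqP j i) => ji; first by rewrite inordK ?ji ?inord_val //; lia.
rewrite inordK; last by lia.
case: (leqP j.-1 i) => ji'.
  have -> : (inord j.-1 : 'I_k.+2) = inord i by congr inord; lia.
  by rewrite Ey; congr (homf y); apply: val_inj; rewrite /= inordK; lia.
by congr (homf y); apply: val_inj; rewrite /= inordK; lia.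
Qed.
End Degeneracy.

Lemma Delta_nonsingular n : nonsingular (Delta n).
Proof.
move=> k y Hy m f g /= E; apply: hom_eq => i.
have Eyi : y (f i) = y (g i) by have := f_equal (fun h : Hom m n => h i) E.
case: (eqVneq (f i) (g i)) => // Hfg; exfalso; apply: Hy.
have [a [b [ab Eab]]] : exists a b : 'I_k.+1, a < b /\ y a = y b.
  case: (ltngtP (f i) (g i)) => [lt|lt|/val_inj E']; last by rewrite E' eqxx in Hfg.
  - by exists (f i), (g i).
  - by exists (g i), (f i).
have [j jk Ej] := hom_step_eq_of_not_injective ab Eab.
case: k y {f g E Eyi Hfg a b ab Eab} j jk Ej => [//|k] y j jk Ej.
exact: degenerate_of_step Ej.
Qed.

Section SimplicialQuotient.
Variables (Y : sSet) (R : forall n, Y n -> Y n -> Prop).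
Hypothesis HR : compat_equiv Y R.

Lemma quotS_act_cls m n (t : Hom m n) (y : Y n) :
  sact (s := quotS Y R) t (cls (@R n) y) = cls (@R m) (sact t y).
Proof.
case: HR => Heq Hc; apply: cls_eq; first exact: Heq.
by apply: Hc; apply: (equiv_sym _ _ (Heq n)); apply: rep_cls.
Qed.

Lemma quotS_simplicial : is_simplicial Y -> is_simplicial (quotS Y R).
Proof.
case=> Hid Hcomp; split.
- by move=> n; apply: quot_ind => y; rewrite quotS_act_cls Hid.
- by move=> m n p f g; apply: quot_ind => y; rewrite !quotS_act_cls Hcomp.
Qed.

Lemma quotS_rel_vertices : is_simplicial Y -> nonsingular (quotS Y R) ->
  forall n (y : Y n) k (f g : Hom k n),
  (forall i, R (sact (hom_vertex (f i)) y) (sact (hom_vertex (g i)) y)) ->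
  R (sact f y) (sact g y).
Proof.
move=> HY Hns n y k f g Hv; case: HR => Heq _; apply: (cls_inj (Heq k)).
rewrite -!quotS_act_cls; apply: (nonsingular_act_vertices (quotS_simplicial HY) Hns) => i.
by rewrite !quotS_act_cls; apply: cls_eq.
Qed.
End SimplicialQuotient.

Section DesingularizationOfFinest.
Variables (Y W : sSet) (phi : smap Y W) (sec : forall n, W n -> Y n).
Hypothesis phi_sec : forall n (w : W n), phi n (sec w) = w.
Hypothesis W_nonsingular : nonsingular W.
Hypothesis ker_finest : forall R, compat_equiv Y R -> nonsingular (quotS Y R) ->
  forall n (y y' : Y n), phi n y = phi n y' -> R n y y'.

Definition ker_rel n (y y' : Y n) : Prop := phi n y = phi n y'.

Lemma ker_rel_equiv n : equivalence (Y n) (@ker_rel n).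
Proof. by rewrite /ker_rel; split=> [y|x y z ->|x y ->]. Qed.

Lemma ker_rel_compat : compat_equiv Y ker_rel.
Proof.
split; first exact: ker_rel_equiv.
by move=> m n t y y'; rewrite /ker_rel !smap_nat => ->.
Qed.

Lemma phi_rep_cls n (y : Y n) : phi n (rep (cls (@ker_rel n) y)) = phi n y.
Proof. by symmetry; apply: (rep_cls (ker_rel_equiv n)). Qed.

(* A degeneracy of [phi (rep P)] lifts to one of [P] through the section. *)
Lemma ker_nonsingular : nonsingular (quotS Y ker_rel).
Proof.
move=> n P HP k f g E.
have Hw : ~ degenerate (phi n (rep P)).
  move=> [m [s [z [mn Ez]]]]; apply: HP; exists m, s, (cls (@ker_rel m) (sec z)).
  split=> //; rewrite -[LHS](cls_rep P) /=; apply: cls_eq; first exact: ker_rel_equiv.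
  by rewrite /ker_rel smap_nat phi_rep_cls phi_sec.
apply: (W_nonsingular Hw); rewrite -!smap_nat.
exact: (cls_inj (ker_rel_equiv k) E).
Qed.

Definition ker_index : DIndex Y :=
  exist _ ker_rel (conj ker_rel_compat ker_nonsingular).

Lemma Dmap_eq n (y y' : Y n) : Dmap y = Dmap y' <-> phi n y = phi n y'.
Proof.
split=> [E|E].
- have /= E' := f_equal (fun p => p ker_index) E.
  exact: (cls_inj (ker_rel_equiv n) E').
- apply: functional_extensionality_dep => -[R [HRc HRns]] /=.
  by apply: cls_eq; [exact: HRc.1 n | exact: ker_finest].
Qed.

Definition desing_pick n (p : Desing Y n) : Y n :=
  proj1_sig (constructive_indefinite_description _ (proj2_sig p)).

Lemma desing_pickP n (p : Desing Y n) : proj1_sig p = Dmap (desing_pick p).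
Proof. by rewrite /desing_pick; case: (constructive_indefinite_description _ _). Qed.

Definition desing_to n (p : Desing Y n) : W n := phi n (desing_pick p).

Lemma desing_to_nat m n (f : Hom m n) (p : Desing Y n) :
  desing_to (sact f p) = sact f (desing_to p).
Proof.
rewrite /desing_to -smap_nat; apply/Dmap_eq.
by rewrite -desing_pickP -Dmap_nat -desing_pickP.
Qed.

Definition desing_of n (w : W n) : Desing Y n :=
  exist _ (Dmap (sec w)) (ex_intro _ (sec w) erefl).

Lemma desing_of_nat m n (f : Hom m n) (w : W n) :
  desing_of (sact f w) = sact f (desing_of w).
Proof.
apply: eq_sig_hprop => [x p q|]; first exact: proof_irrelevance.
change (Dmap (sec (sact f w)) = sact (s := DProd Y) f (Dmap (sec w))).
by rewrite Dmap_nat; apply/Dmap_eq; rewrite smap_nat !phi_sec.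
Qed.

Lemma Desing_iso : sIso (Desing Y) W.
Proof.
exists (MkSMap desing_to_nat), (MkSMap desing_of_nat); split=> /= n.
- move=> p; apply: eq_sig_hprop => [x p1 q|]; first exact: proof_irrelevance.
  by rewrite /= desing_pickP; apply/Dmap_eq; rewrite phi_sec.
- by move=> w; rewrite /desing_to; have /Dmap_eq <- := desing_pickP (desing_of w).
Qed.
End DesingularizationOfFinest.

Notation X2_rel k := (pushout_rel (@to_pt (bDelta 2)) (@bincl 2) k).

Lemma X2_rel_equiv k : equivalence _ (X2_rel k).
Proof. exact: clos_rst_is_equiv. Qed.

Lemma sum_act_rel m k (t : Hom m k) u v :
  X2_rel k u v -> X2_rel m (sum_act t u) (sum_act t v).
Proof.
apply: clos_rst_map => x y [c [-> ->]] /=; exists (sact t c); split=> //.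
by congr inl; apply: hom_eq => i; apply: ord1_eq.
Qed.

Lemma X2_act_cls m k (t : Hom m k) u :
  sact (s := X2) t (cls (X2_rel k) u) = cls (X2_rel m) (sum_act t u).
Proof.
apply: cls_eq; first exact: X2_rel_equiv.
by apply: sum_act_rel; apply: rst_sym; apply: (rep_cls (X2_rel_equiv k)).
Qed.

Definition iota2 : X2 2 := cls (X2_rel 2) (inr (hom_id 2)).

Lemma act_iota2 n (s : Hom n 2) : sact s iota2 = cls (X2_rel n) (inr s).
Proof. by rewrite X2_act_cls; congr (cls _ (inr _)); apply: hom_eq. Qed.

Definition basepoint n : X2 n := cls (X2_rel n) (inl (MkHom (@ord_mono_const0 n))).

Lemma act_iota2_not_surj n (s : Hom n 2) : not_surj s -> sact s iota2 = basepoint n.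
Proof.
move=> Hs; rewrite act_iota2; apply: cls_eq; first exact: X2_rel_equiv.
by apply: rst_sym; apply: rst_step; exists (exist _ s Hs).
Qed.

Lemma X2_gen n (x : X2 n) : exists s : Hom n 2, x = sact s iota2.
Proof.
rewrite -(cls_rep x); case: (rep x) => [p|s]; last by exists s; rewrite act_iota2.
exists (hom_const n ord0); rewrite act_iota2_not_surj; last by exists ord_max.
by congr (cls _ (inl _)); apply: hom_eq => i; apply: ord1_eq.
Qed.

(* [covers x S]: the vertices in [S] of [x] hit every vertex of the non-degenerate
   2-simplex; this is false on the collapsed boundary. *)
Definition covers_rep k (u : (Delta 0 k + Delta 2 k)%type) (S : {set 'I_k.+1}) : bool :=
  if u is inr s then homf s @: S == setT else false.

Lemma covers_rep_rel k u v S : X2_rel k u v -> covers_rep u S = covers_rep v S.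
Proof.
apply: (clos_rst_congr (f := fun w => covers_rep w S)) => x y [[s [j Hj]] [-> ->]] /=.
apply/esym/negP => /eqP E; have : j \in homf s @: S by rewrite E inE.
by case/imsetP => i _ Ei; move: (Hj i); rewrite -Ei eqxx.
Qed.

Definition covers k (x : X2 k) S := covers_rep (rep x) S.

Lemma covers_cls k u S : covers (cls (X2_rel k) u) S = covers_rep u S.
Proof. by apply: covers_rep_rel; apply: rst_sym; apply: (rep_cls (X2_rel_equiv k)). Qed.

Lemma covers_act m k (t : Hom m k) (x : X2 k) S :
  covers (sact t x) S = covers x (homf t @: S).
Proof. by rewrite /= covers_cls /covers; case: (rep x) => //= s; rewrite -imset_comp. Qed.

Lemma covers_iota2 S : covers iota2 S = (S == setT).
Proof. by rewrite covers_cls /= imset_id. Qed.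

Lemma covers_mono k (x : X2 k) (S S' : {set 'I_k.+1}) :
  S \subset S' -> covers x S -> covers x S'.
Proof.
rewrite /covers; case: (rep x) => //= s HS /eqP E.
by rewrite eqEsubset subsetT /= -E; apply: imsetS.
Qed.

Section Subdivision.
Variable X : sSet.

Lemma Sd_rel_equiv k : equivalence _ (Sd_rel X k).
Proof. exact: clos_rst_is_equiv. Qed.

Lemma Sd_act_rel k' k (t : Hom k' k) u v :
  Sd_rel X k u v -> Sd_rel X k' (Sd_act t u) (Sd_act t v).
Proof.
apply: clos_rst_map => x y [m [n [th [z [c [-> ->]]]]]] /=.
exists m, n, th, z, (chain_pre t c); split=> //.
by congr existT; congr pair; apply: chain_eq.
Qed.

Lemma Sd_act_cls k' k (t : Hom k' k) u :
  sact (s := Sd X) t (cls (Sd_rel X k) u) = cls (Sd_rel X k') (Sd_act t u).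
Proof.
apply: cls_eq; first exact: Sd_rel_equiv.
by apply: Sd_act_rel; apply: rst_sym; apply: (rep_cls (Sd_rel_equiv k)).
Qed.

Lemma Sd_simplicial : is_simplicial (Sd X).
Proof.
split.
- move=> n; apply: quot_ind => -[m [x c]]; rewrite Sd_act_cls; congr cls.
  by congr existT; congr pair; apply: chain_eq.
- move=> m n p f g; apply: quot_ind => -[q [x c]]; rewrite !Sd_act_cls; congr cls.
  by congr existT; congr pair; apply: chain_eq.
Qed.
End Subdivision.

Notation SdX := (Sd X2).

Definition cell k (c : Chain k 2) : SdX k :=
  cls (Sd_rel X2 k) (existT (fun n => (X2 n * Chain k n)%type) 2 (iota2, c)).

Lemma cell_act k' k (t : Hom k' k) (c : Chain k 2) :
  sact (s := SdX) t (cell c) = cell (chain_pre t c).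
Proof. exact: Sd_act_cls. Qed.

Lemma cell_surj k (y : SdX k) : exists d : Chain k 2, y = cell d.
Proof.
rewrite -(cls_rep y); case: (rep y) => n [x c]; have [s ->] := X2_gen x.
exists (chain_push s c); apply: cls_eq; first exact: Sd_rel_equiv.
by apply: rst_step; exists n, 2, s, iota2, c.
Qed.

Definition hom1_fun k (b : 'I_k.+1 -> bool) (i : 'I_k.+1) : 'I_2 :=
  if b i then ord_max else ord0.

Lemma hom1_fun_mono k (b : 'I_k.+1 -> bool) :
  (forall i j : 'I_k.+1, i <= j -> b i -> b j) -> ord_mono (hom1_fun b).
Proof. by move=> Hb i j le; rewrite /hom1_fun; case: ifP => // /(Hb _ _ le) ->. Qed.

Lemma hom1_eq k (h h' : Hom k 1) : (forall i, (h i != ord0) = (h' i != ord0)) -> h = h'.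
Proof.
move=> H; apply: hom_eq => i; move: (H i).
by case: (h i) (h' i) => [[|[|//]] ?] [[|[|//]] ?] //= _; apply: val_inj.
Qed.

Lemma hom1_upward k (h : Hom k 1) (i j : 'I_k.+1) : i <= j -> h i != ord0 -> h j != ord0.
Proof.
move/(homP h); case: (h i) => [[|[|//]] ?] //=.
by case: (h j) => [[|[|//]] ?].
Qed.

Definition sd_covers_rep k (u : Sd_pre X2 k) (i : 'I_k.+1) : bool :=
  covers (projT2 u).1 ((projT2 u).2 i).

Lemma sd_covers_rep_rel k u v : Sd_rel X2 k u v -> sd_covers_rep u = sd_covers_rep v.
Proof.
apply: clos_rst_congr => x y [m [n [th [z [c [-> ->]]]]]].
by apply: functional_extensionality => i; rewrite /sd_covers_rep /= covers_act.
Qed.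

Definition sd_covers k (y : SdX k) := sd_covers_rep (rep y).

Lemma sd_covers_cls k u : sd_covers (cls (Sd_rel X2 k) u) = sd_covers_rep u.
Proof. by apply: sd_covers_rep_rel; apply: rst_sym; apply: (rep_cls (Sd_rel_equiv _ _)). Qed.

Lemma sd_covers_mono k (y : SdX k) (i j : 'I_k.+1) :
  i <= j -> sd_covers y i -> sd_covers y j.
Proof. by move=> le; apply: covers_mono; apply: ch_mono. Qed.

(* [phi y] sends a vertex of [y] (a face of the 2-simplex) to 1 iff it is the whole 2-simplex. *)
Definition phi k (y : SdX k) : Hom k 1 := MkHom (hom1_fun_mono (@sd_covers_mono k y)).

Lemma phi_neq0 k (y : SdX k) i : (phi y i != ord0) = sd_covers y i.
Proof. by rewrite /= /hom1_fun; case: (sd_covers y i). Qed.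

Lemma phi_act k' k (t : Hom k' k) (y : SdX k) : phi (sact t y) = hom_comp (phi y) t.
Proof.
apply: hom1_eq => i; rewrite phi_neq0 /= phi_neq0.
by rewrite (sd_covers_cls (Sd_act t (rep y))).
Qed.

Definition phiS : smap SdX (Delta 1) := @MkSMap SdX (Delta 1) phi phi_act.

Lemma phi_cell k (d : Chain k 2) i : (phi (cell d) i != ord0) = (d i == setT).
Proof. by rewrite phi_neq0 /cell sd_covers_cls /sd_covers_rep /= covers_iota2. Qed.

Lemma subset3_pair (T : {set 'I_3}) : T != set0 -> T != setT ->
  exists a b : 'I_3, a <= b /\ T = [set a; b].
Proof.
move=> /set0Pn [i0 Hi0] HT.
have [a Ha Hamin] := arg_minnP (fun i : 'I_3 => (i : nat)) Hi0.
have [b Hb Hbmax] := arg_maxnP (fun i : 'I_3 => (i : nat)) Hi0.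
exists a, b; split; first exact: Hamin.
apply/setP => x; rewrite !inE; apply/idP/idP; last by case/orP => /eqP ->.
move=> Hx; apply: contraR HT; rewrite negb_or => /andP [xa xb].
have ax := Hamin x Hx; have xb' := Hbmax x Hx.
apply/eqP/setP => y; rewrite inE.
have [-> //|ya] := eqVneq y a; have [-> //|yb] := eqVneq y b.
have [-> //|yx] := eqVneq y x; exfalso.
move: xa xb ya yb yx; rewrite -!(inj_eq (@ord_inj 3)).
by have := ltn_ord a; have := ltn_ord b; have := ltn_ord x; have := ltn_ord y; lia.
Qed.

Lemma setT_ord_neq0 n : [set: 'I_n.+1] != set0.
Proof. by apply/set0Pn; exists ord0; rewrite inE. Qed.

Definition chain_top k n : Chain k n :=
  @MkChain k n (fun _ => setT) (fun _ => setT_ord_neq0 n) (fun _ _ _ => subxx _).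

Definition vertex_star : SdX 0 :=
  cls (Sd_rel X2 0) (existT (fun n => (X2 n * Chain 0 n)%type) 1 (basepoint 1, chain_top 0 1)).

Lemma hom_pair_mono (a b : 'I_3) : a <= b ->
  ord_mono (fun i : 'I_2 => if i == ord0 then a else b).
Proof. by move=> ab [[|[|//]] ?] [[|[|//]] ?]. Qed.

Definition hom_pair (a b : 'I_3) (ab : a <= b) : Hom 1 2 := MkHom (hom_pair_mono ab).

(* A proper face [{a, b}] of the 2-simplex is the image of the non-surjective
   [hom_pair a b : [1] -> [2]], through which [cell] factors over the basepoint. *)
Lemma cell_vertex_star (c : Chain 0 2) : c ord0 != setT -> cell c = vertex_star.
Proof.
move=> Hc; have [a [b [ab E]]] := subset3_pair (ch_ne c ord0) Hc.
have Eimg : homf (hom_pair ab) @: setT = [set a; b].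
  apply/setP => x; rewrite !inE; apply/imsetP/orP.
  - by case=> i _ ->; rewrite /=; case: (i == ord0); [left|right].
  - by case=> /eqP ->; [exists ord0 | exists ord_max].
have Ech : chain_push (hom_pair ab) (chain_top 0 1) = c.
  by apply: chain_eq => i; rewrite (ord1_eq i ord0) /= Eimg E.
have Hns : not_surj (hom_pair ab).
  move: Hc; rewrite E eqEsubset subsetT /= => /subsetPn [j _ Hj].
  exists j => i; apply: contraNneq Hj => <-.
  by rewrite !inE /=; case: (i == ord0); rewrite eqxx ?orbT.
rewrite -Ech /cell /vertex_star; apply: cls_eq; first exact: Sd_rel_equiv.
apply: rst_sym; apply: rst_step; exists 1, 2, (hom_pair ab), iota2, (chain_top 0 1).
by rewrite act_iota2_not_surj.
Qed.

Lemma cell_vertex_eq (c c' : Chain 0 2) :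
  (c ord0 == setT) = (c' ord0 == setT) -> cell c = cell c'.
Proof.
have [/eqP Hc|Hc] := boolP (c ord0 == setT) => Hc'.
- congr cell; apply: chain_eq => i; rewrite (ord1_eq i ord0) Hc.
  by apply/esym/eqP; rewrite -Hc'.
- by rewrite !cell_vertex_star // -Hc'.
Qed.

Section ChainCat.
Variables (a b n : nat) (c1 : Chain a n) (c2 : Chain b n).
Hypothesis c12 : c1 ord_max \subset c2 ord0.

Definition chain_cat_fun (j : 'I_(a.+1 + b.+1)) : {set 'I_n.+1} :=
  match split j with inl i => c1 i | inr i => c2 i end.

Lemma chain_cat_ne j : chain_cat_fun j != set0.
Proof. by rewrite /chain_cat_fun; case: split => i; apply: ch_ne. Qed.

Lemma chain_cat_mono (j j' : 'I_(a.+1 + b.+1)) : j <= j' -> chain_cat_fun j \subset chain_cat_fun j'.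
Proof.
rewrite /chain_cat_fun; case: splitP => i -> ; case: splitP => i' -> le.
- by apply: ch_mono.
- apply: subset_trans (ch_mono c1 (_ : i <= ord_max)) _; first by rewrite -ltnS.
  by apply: subset_trans c12 (ch_mono c2 (_ : ord0 <= i')).
- by have := ltn_ord i'; lia.
- by apply: ch_mono; lia.
Qed.

Definition chain_cat : Chain (a + b.+1) n := MkChain chain_cat_ne chain_cat_mono.

Lemma chain_cat_lshift (i : 'I_a.+1) : chain_cat (lshift b.+1 i) = c1 i.
Proof. by rewrite /= /chain_cat_fun (unsplitK (inl i)). Qed.

Lemma chain_cat_rshift (i : 'I_b.+1) : chain_cat (rshift a.+1 i) = c2 i.
Proof. by rewrite /= /chain_cat_fun (unsplitK (inr i)). Qed.
End ChainCat.

Definition rshift_fun a b (i : 'I_b.+1) : 'I_(a.+1 + b.+1) := rshift a.+1 i.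

Lemma rshift_fun_mono a b : ord_mono (@rshift_fun a b).
Proof. by move=> i j /=; rewrite leq_add2l. Qed.

Definition rshift_hom a b : Hom b (a + b.+1) := MkHom (@rshift_fun_mono a b).

Section Raise.
Variables (k : nat) (h : Hom k 1).

Definition raise_fun (T : {set 'I_3}) (i : 'I_k.+1) : {set 'I_3} :=
  if h i != ord0 then setT else T.

Lemma raise_fun_ne T : T != set0 -> forall i, raise_fun T i != set0.
Proof. by move=> HT i; rewrite /raise_fun; case: ifP => // _; apply: setT_ord_neq0. Qed.

Lemma raise_fun_mono T (i j : 'I_k.+1) : i <= j -> raise_fun T i \subset raise_fun T j.
Proof.
move=> le; rewrite /raise_fun; case: ifP => Hi; first by rewrite (hom1_upward le Hi).
by case: ifP; rewrite ?subsetT.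
Qed.

Definition raise T (HT : T != set0) : Chain k 2 := MkChain (raise_fun_ne HT) (@raise_fun_mono T).

Lemma raise_full T (HT : T != set0) i : T != setT -> (raise HT i == setT) = (h i != ord0).
Proof. by move=> HT1; rewrite /= /raise_fun; case: ifP; rewrite ?eqxx // (negbTE HT1). Qed.

Lemma phi_raise T (HT : T != set0) : T != setT -> phi (cell (raise HT)) = h.
Proof. by move=> HT1; apply: hom1_eq => i; rewrite phi_cell raise_full. Qed.

(* The cap replaces the full entries of [d] by [T], so it lies below [raise HT]; [d] is then
   the face of the concatenation that reads the cap where [h = 0] and [raise HT] where [h = 1]. *)
Section Cap.
Variables (d : Chain k 2) (T : {set 'I_3}).
Hypothesis d_sub : forall i, h i == ord0 -> d i \subset T.
Hypothesis d_full : forall i, (d i == setT) = (h i != ord0).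

Definition cap_fun (i : 'I_k.+1) : {set 'I_3} := if h i != ord0 then T else d i.

Lemma cap_fun_ne : T != set0 -> forall i, cap_fun i != set0.
Proof. by move=> HT i; rewrite /cap_fun; case: ifP => // _; apply: ch_ne. Qed.

Lemma cap_fun_sub i : cap_fun i \subset T.
Proof. by rewrite /cap_fun; case: ifP => // /negbFE; apply: d_sub. Qed.

Lemma cap_fun_mono (i j : 'I_k.+1) : i <= j -> cap_fun i \subset cap_fun j.
Proof.
move=> le; rewrite {2}/cap_fun; case: ifP => Hj; first exact: cap_fun_sub.
rewrite /cap_fun; case: ifP => Hi; first by rewrite (hom1_upward le Hi) in Hj.
exact: ch_mono.
Qed.

Definition face_fun (i : 'I_k.+1) : 'I_(k.+1 + k.+1) :=
  if h i != ord0 then rshift k.+1 i else lshift k.+1 i.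

Lemma face_fun_mono : ord_mono face_fun.
Proof.
move=> i j le; have := ltn_ord i; have := ltn_ord j; rewrite /face_fun.
case: ifP => Hi; first by rewrite (hom1_upward le Hi) /=; lia.
by case: ifP => _ /=; lia.
Qed.

Definition face_hom : Hom k (k + k.+1) := MkHom face_fun_mono.

Variable (HT : T != set0).

Lemma cap_raise_sub : MkChain (cap_fun_ne HT) cap_fun_mono ord_max \subset raise HT ord0.
Proof.
apply: subset_trans (cap_fun_sub _) _; rewrite /= /raise_fun.
by case: ifP; rewrite ?subsetT.
Qed.

Definition cap_raise : Chain (k + k.+1) 2 := chain_cat cap_raise_sub.

Lemma cap_raise_face : chain_pre face_hom cap_raise = d.
Proof.
apply: chain_eq => i; change (cap_raise (face_fun i) = d i); rewrite /face_fun.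
case: ifP => Hi; last by rewrite chain_cat_lshift /= /cap_fun Hi.
by rewrite chain_cat_rshift /= /raise_fun Hi; apply/esym/eqP; rewrite d_full.
Qed.

Lemma cap_raise_rshift : chain_pre (rshift_hom k k) cap_raise = raise HT.
Proof. by apply: chain_eq => i; apply: chain_cat_rshift. Qed.
End Cap.
End Raise.

Lemma set1_ord0_neq0 : [set ord0 : 'I_3] != set0.
Proof. by apply/set0Pn; exists ord0; rewrite inE. Qed.

Lemma set1_ord0_neqT : [set ord0 : 'I_3] != setT.
Proof. by apply/eqP => /setP /(_ ord_max); rewrite !inE. Qed.

Definition canon k (h : Hom k 1) : SdX k := cell (raise h set1_ord0_neq0).

Lemma phi_canon k (h : Hom k 1) : phi (canon h) = h.
Proof. exact: phi_raise set1_ord0_neqT. Qed.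

Section FinestRelation.
Variable R : forall n, SdX n -> SdX n -> Prop.
Hypothesis HR : compat_equiv SdX R.
Hypothesis R_nonsingular : nonsingular (quotS SdX R).

(* Faces of a common cell with the same vertices are identified, because vertices
   of [Sd X2] are determined by whether they are the whole 2-simplex. *)
Lemma cell_rel_faces m (e : Chain m 2) k (f g : Hom k m) (c c' : Chain k 2) :
  chain_pre f e = c -> chain_pre g e = c' ->
  (forall i, (c i == setT) = (c' i == setT)) -> R (cell c) (cell c').
Proof.
move=> <- <- He; rewrite -!cell_act.
apply: (quotS_rel_vertices HR (Sd_simplicial X2) R_nonsingular) => i.
rewrite !cell_act (@cell_vertex_eq _ (chain_pre (hom_vertex (g i)) e)); last exact: He.
exact: (equiv_refl _ _ (HR.1 0)).
Qed.

Lemma cell_rel_raise k (d : Chain k 2) (h : Hom k 1) T (HT : T != set0) :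
  T != setT -> (forall i, (d i == setT) = (h i != ord0)) ->
  (forall i, h i == ord0 -> d i \subset T) -> R (cell d) (cell (raise h HT)).
Proof.
move=> HT1 d_full d_sub.
apply: (cell_rel_faces (cap_raise_face d_sub d_full HT) (cap_raise_rshift d_sub HT)) => i.
by rewrite d_full raise_full.
Qed.

Lemma raise_rel_sub k (h : Hom k 1) S T (HS : S != set0) (HT : T != set0) :
  S \subset T -> T != setT -> R (cell (raise h HS)) (cell (raise h HT)).
Proof.
move=> ST HT1; have HS1 : S != setT.
  by apply: contraNneq HT1 => ES; rewrite eqEsubset subsetT -ES.
apply: cell_rel_raise => // i; first exact: raise_full.
by rewrite /= /raise_fun => /eqP ->.
Qed.

Lemma raise_rel_canon k (h : Hom k 1) T (HT : T != set0) :
  T != setT -> R (cell (raise h HT)) (canon h).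
Proof.
(* Zigzag [T >= {t} <= {0, t} >= {0}] with [t \in T]. *)
move=> HT1; case: (HR.1 k) => _ Rtrans Rsym.
have [t Ht] := set0Pn _ HT.
have Ht0 : [set t] != set0 by apply/set0Pn; exists t; rewrite inE.
have H0t0 : [set ord0; t] != set0 by apply/set0Pn; exists ord0; rewrite !inE eqxx.
have H0t1 : [set ord0; t] != setT.
  by apply/eqP => E; have := cards2 ord0 t; rewrite E cardsT card_ord; case: (_ != _).
have sub1 : [set t] \subset T by rewrite sub1set.
have sub2 : [set t] \subset [set ord0; t] by rewrite sub1set !inE eqxx orbT.
have sub3 : [set ord0] \subset [set ord0; t] by rewrite sub1set !inE eqxx.
apply: (Rtrans _ _ _ (Rsym _ _ (raise_rel_sub h Ht0 HT sub1 HT1))).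
apply: (Rtrans _ _ _ (raise_rel_sub h Ht0 H0t0 sub2 H0t1)).
exact: (Rsym _ _ (raise_rel_sub h set1_ord0_neq0 H0t0 sub3 H0t1)).
Qed.

Lemma cell_rel_canon k (d : Chain k 2) : R (cell d) (canon (phi (cell d))).
Proof.
set h := phi (cell d); have d_full i : (d i == setT) = (h i != ord0) by rewrite phi_cell.
case: (HR.1 k) => _ Rtrans _.
have [/existsP [i0 Hi0]|none0] := boolP [exists i, h i == ord0]; last first.
  apply: cell_rel_raise set1_ord0_neqT d_full _ => i Hi.
  by case/existsP: none0; exists i.
(* The last non-full entry [d j] contains all non-full entries. *)
have [j Hj Hjmax] := @arg_maxnP _ i0 (fun i => h i == ord0) (fun i : 'I_k.+1 => val i) Hi0.
have Hdj : d j != setT by rewrite d_full Hj.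
apply: (Rtrans _ _ _ _ (@raise_rel_canon k h _ (ch_ne d j) Hdj)).
by apply: cell_rel_raise Hdj d_full _ => i /Hjmax; apply: ch_mono.
Qed.

Lemma phi_ker_finest k (y y' : SdX k) : phi y = phi y' -> R y y'.
Proof.
case: (HR.1 k) => _ Rtrans Rsym.
have [d ->] := cell_surj y; have [d' ->] := cell_surj y' => E.
apply: (Rtrans _ _ _ (cell_rel_canon d)); rewrite E.
exact: (Rsym _ _ (cell_rel_canon d')).
Qed.
End FinestRelation.

Theorem mainTheorem10 : sIso (Desing (Sd X2)) (Delta 1).
Proof.
apply: (@Desing_iso _ _ phiS canon).
- exact: phi_canon.
- exact: Delta_nonsingular.
- by move=> R HR HRns n y y'; apply: phi_ker_finest.
Qed.
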